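(* Let $W=\langle s,t: s^2=t^2=(st)^m=1\rangle$ with $S=\{s,t\}$ and $m=2k$, $k>0$, the order of $st$. Let $W^+=\langle st\rangle$ and, for a fixed primitive $m$-th root of unity $\zeta_m$, let $\chi_j$ be the linear character of $W^+$ with $\chi_j(st)=\zeta_m^j$. Put $\varphi_{(st)^j}=\chi_{2j}$ for $0<j<k$ and $\varphi_{(st)^k}=\epsilon_S$. Then $\varphi_{(st)^j}$ is a linear character of $C_W((st)^j)$ for $j=1,\dots,k$, and $\sum_{j=1}^k\operatorname{Ind}_{C_W((st)^j)}^W\varphi_{(st)^j}=\epsilon_S+\sum_{j=1}^{k-1}\operatorname{Ind}_{W^+}^W\chi_{2j}=\Phi_S$.
   Context: $\epsilon_S$ is the sign character of $W$. $\Phi_S$ is the character of $W$ acting by right multiplication on $e_S\mathbb CW$, where: for $J\subseteq S$, $X_J=\{w:\ell(rw)>\ell(w)\ \forall r\in J\}$, $x_J=\sum_{x\in X_J}x^{-1}$, $X_J^\sharp=\{x\in X_J:x^{-1}Jx\subseteq S\}$, $m_{KL}=|X_K\cap X_L^\sharp|$ if $L\subseteq K$ and $0$ otherwise, and $e_L$ is defined by $x_K=\sum_Lm_{KL}e_L$. (Equivalently, $\Phi_S=\operatorname{Ind}_{\langle w_0\rangle}^W(1)-1_S$ with $w_0$ the longest element.) *)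

From HB Require Import structures.
From mathcomp Require Import all_boot all_order all_algebra all_fingroup all_solvable all_field all_character.
Set Implicit Arguments. Unset Strict Implicit. Unset Printing Implicit Defensive.
Import Order.TTheory GRing.Theory Num.Theory.
Local Open Scope ring_scope.

(* Coxeter length w.r.t. a generating set S of involutions:
   the least n such that w is a product of n elements of S
   (words of length < #|gT| suffice for elements of <<S>>). *)
Definition word_of_len (gT : finGroupType) (S : {set gT}) (w : gT) (n : nat) :=
  [exists ws : n.-tuple gT, all (fun x => x \in S) ws && ((\prod_(x <- ws) x)%g == w)].

Definition cox_len (gT : finGroupType) (S : {set gT}) (w : gT) : nat :=
  (\big[minn/#|gT|]_(n < #|gT| | word_of_len S w n) n)%N.

Definition is_longest (gT : finGroupType) (S : {set gT}) (w : gT) : bool :=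
  (w \in <<S>>%g) && [forall v in <<S>>%g, (cox_len S v <= cox_len S w)%N].

Definition Phi_S (gT : finGroupType) (S : {set gT}) (w0 : gT) : 'CF(<<S>>%g) :=
  'Ind[<<S>>%g] (1 : 'CF(<[w0]>)) - 1.

Definition phi_st (gT : finGroupType) (s t : gT) (k : nat)
  (eps : 'CF(<<[set s; t]>>)) (chi : nat -> 'CF(<[(s * t)%g]>)) (j : nat)
  : 'CF('C_(<<[set s; t]>>)[((s * t) ^+ j)%g]) :=
  if (j < k)%N then 'Res (chi (2 * j)%N) else 'Res eps.
Arguments Phi_S {gT} S w0.

From HB Require Import structures.
From mathcomp Require Import all_boot all_order all_algebra all_fingroup all_solvable.
From mathcomp Require Import all_field all_character.
From mathcomp Require Import zify ring.
Set Implicit Arguments. Unset Strict Implicit. Unset Printing Implicit Defensive.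
Import Order.TTheory GRing.Theory Num.Theory.
Local Open Scope group_scope.

(* W = <<s, t>> is the dihedral group <[r]> ><| <[s]> of order 4k, with r = st
   inverted by both generators.  A word of length n in s and t evaluates to an
   alternating product: r^a or r^-a with 2a <= n, or r^a s or r^-a t with
   2a < n.  As r^k has no such expression with n < 2k while every other element
   has one, the longest element is w0 = r^k, which is central.  Hence
   C_W(r^j) = <[r]> for 0 < j < k and C_W(r^k) = W.  Inducing from <[r]> across
   the coset of s gives Ind chi_2j (r^a) = u^j + u^-j with u = zeta^(2a),
   vanishing off <[r]>; summing over 0 < j < k with the roots of unity sum, the
   left-hand side is 2k - 1 on <[r^k]>, -1 elsewhere, which is Ind_<[w0]> 1 - 1. *)

Section CoxeterLength.

Variables (gT : finGroupType) (S : {set gT}).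

Lemma word_of_lenP w n :
  reflect (exists ws : seq gT,
             [/\ size ws = n, all (fun x => x \in S) ws & \prod_(x <- ws) x = w])
          (word_of_len S w n).
Proof.
apply: (iffP existsP) => [[ws /andP[Sws /eqP <-]] | [ws [<- Sws <-]]].
  by exists ws; rewrite size_tuple.
by exists (in_tuple ws); rewrite Sws eqxx.
Qed.

Lemma cox_len_le w n :
  (n < #|gT|)%N -> word_of_len S w n -> (cox_len S w <= n)%N.
Proof.
move=> lt_n_gT wn; rewrite /cox_len -minEnat.
exact (ge_bigmin_seq _ (Ordinal lt_n_gT) _ (@nat_of_ord _) (mem_index_enum _) wn).
Qed.

Lemma cox_len_ge w m :
  (m <= #|gT|)%N -> (forall n, word_of_len S w n -> m <= n)%N ->
  (m <= cox_len S w)%N.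
Proof.
move=> le_m_gT ge_m; apply: (big_ind (fun x => m <= x)%N) => // [x y mx my | i /ge_m //].
by rewrite leq_min mx my.
Qed.

End CoxeterLength.

Section InvolutionWords.

Variable gT : finGroupType.
Implicit Types x y g : gT.

Lemma mulg_invol x : #[x] = 2%N -> x * x = 1.
Proof. by move=> ox; rewrite -{1}(invg2id ox) mulVg. Qed.

Lemma mulg_invol_conj x g : #[x] = 2%N -> x * g = g ^ x * x.
Proof. by move=> ox; rewrite conjgCV invg2id. Qed.

Definition alt_word x y (a : nat) := flatten (nseq a [:: x; y]).

Lemma size_alt_word x y a : size (alt_word x y a) = (2 * a)%N.
Proof. by elim: a => //= a IHa; rewrite /alt_word /= in IHa *; rewrite IHa; lia. Qed.

Lemma prod_alt_word x y a : \prod_(z <- alt_word x y a) z = (x * y) ^+ a.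
Proof.
elim: a => [|a IHa]; first by rewrite /alt_word big_nil.
by rewrite /alt_word /= !big_cons -/(alt_word x y a) IHa expgS mulgA.
Qed.

Lemma all_alt_word (S : {set gT}) x y a :
  x \in S -> y \in S -> all (fun z => z \in S) (alt_word x y a).
Proof. by move=> Sx Sy; elim: a => //= a ->; rewrite Sx Sy. Qed.

End InvolutionWords.

Local Open Scope ring_scope.

Lemma cfInd_Res_eqset (gT : finGroupType) (G H K : {group gT}) (phi : 'CF(K)) :
  H :=: K -> 'Ind[G] ('Res[H] phi) = 'Ind[G] phi.
Proof. by move=> /val_inj eHK; rewrite eHK cfRes_id. Qed.

Lemma cfInd_sdprod_involution (gT : finGroupType) (K G : {group gT}) (x : gT)
    (phi : 'CF(K)) y :
  #[x]%g = 2%N -> K ><| <[x]> = G -> ('Ind[G] phi) y = phi y + phi (y ^ x)%g.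
Proof.
move=> ox sdG; rewrite (cfIndEsdprod _ _ sdG) (_ : gval <[x]>%G = [set 1%g; x]).
  by rewrite big_setU1 ?big_set1 ?conjg1 // inE eq_sym -order_eq1 ox.
exact: cycle2g.
Qed.

Lemma sumr_expr_unity_root (R : idomainType) (u : R) (k : nat) :
  (0 < k)%N -> u ^+ k = 1 ->
  \sum_(1 <= j < k) u ^+ j = (if u == 1 then k%:R else 0) - 1.
Proof.
move=> k_gt0 uk1; apply/eqP; rewrite eq_sym subr_eq addrC.
rewrite -[X in X + _](expr0 u) -big_ltn // big_mkord; apply/eqP.
have [-> | u_neq1] := eqVneq u 1.
  by rewrite (eq_bigr (fun=> 1)) ?sumr_const ?card_ord // => i _; rewrite expr1n.
have /eqP := subrX1 u k; rewrite uk1 subrr eq_sym mulf_eq0 subr_eq0.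
by rewrite (negbTE u_neq1) => /eqP.
Qed.

Local Close Scope ring_scope.

Section DihedralCoxeterSystem.

Variables (gT : finGroupType) (s t : gT) (k : nat).
Hypotheses (k_gt0 : (0 < k)%N) (os : #[s] = 2%N) (ot : #[t] = 2%N)
  (ort : #[s * t] = (2 * k)%N).

Local Notation r := (s * t).
Local Notation W := <<[set s; t]>>.

Lemma invg_st : r^-1 = t * s.
Proof. by rewrite invMg !invg2id. Qed.

Lemma mulg_st_t : r * t = s. Proof. by rewrite -mulgA (mulg_invol ot) mulg1. Qed.
Lemma mulVg_st_s : r^-1 * s = t. Proof. by rewrite invg_st -mulgA (mulg_invol os) mulg1. Qed.

Lemma conjg_st_s : r ^ s = r^-1.
Proof. by rewrite conjgE (invg2id os) invg_st !mulgA (mulg_invol os) mul1g. Qed.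

Lemma conjg_st_t : r ^ t = r^-1.
Proof. by rewrite conjgE (invg2id ot) invg_st -!mulgA (mulg_invol ot) mulg1. Qed.

Lemma conjXg_st_s a : (r ^+ a) ^ s = r^-1 ^+ a. Proof. by rewrite conjXg conjg_st_s. Qed.
Lemma conjXg_st_t a : (r ^+ a) ^ t = r^-1 ^+ a. Proof. by rewrite conjXg conjg_st_t. Qed.
Lemma conjXVg_st_s a : (r^-1 ^+ a) ^ s = r ^+ a.
Proof. by rewrite conjXg conjVg conjg_st_s invgK. Qed.
Lemma conjXVg_st_t a : (r^-1 ^+ a) ^ t = r ^+ a.
Proof. by rewrite conjXg conjVg conjg_st_t invgK. Qed.

Lemma s_in_st : s \in [set s; t]. Proof. exact: set21. Qed.
Lemma t_in_st : t \in [set s; t]. Proof. exact: set22. Qed.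
Lemma s_in_W : s \in W. Proof. by rewrite mem_gen ?s_in_st. Qed.
Lemma t_in_W : t \in W. Proof. by rewrite mem_gen ?t_in_st. Qed.
Lemma st_in_W : r \in W. Proof. by rewrite groupM ?s_in_W ?t_in_W. Qed.

Lemma expg_st_2k : r ^+ (2 * k) = 1. Proof. by rewrite -ort expg_order. Qed.

Lemma s_notin_cycle_st : s \notin <[r]>.
Proof.
apply/negP => /cycleP[i def_s].
have rs_r : r ^ s = r.
  have cm : commute r s by rewrite {2}def_s; apply: commuteX.
  by rewrite conjgE cm mulKg.
have /(dvdn_leq (ltn0Sn 1)) : (2 * k %| 2)%N.
  by rewrite -ort order_dvdn expgS expg1 -{2}rs_r conjg_st_s mulgV.
rewrite -{2}[2%N]muln1 leq_pmul2l // => k_le1.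
have or2 : #[r] = 2%N by rewrite ort; lia.
have : s \in <[r]> by rewrite {1}def_s mem_cycle.
rewrite cycle2g // !inE -order_eq1 os /= => /eqP def_r.
by move: ot; rewrite -(mulKg s t) -def_r mulVg order1.
Qed.

Lemma reflection_notin_cycle_st a : r ^+ a * s \notin <[r]>.
Proof. by rewrite groupMl ?mem_cycle ?s_notin_cycle_st. Qed.

Lemma t_notin_cycle_st : t \notin <[r]>.
Proof. by rewrite -[X in X \notin _]mulVg_st_s groupMl ?groupV ?cycle_id ?s_notin_cycle_st. Qed.

Lemma dihedral_norm_cycle_st : W \subset 'N(<[r]>).
Proof.
rewrite gen_subG; apply/subsetP => x /set2P[]->.
  by apply/normP; rewrite -cycleJ conjg_st_s cycleV.
by apply/normP; rewrite -cycleJ conjg_st_t cycleV.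
Qed.

Lemma dihedral_sdprod : <[r]> ><| <[s]> = W.
Proof.
have nrs : <[s]> \subset 'N(<[r]>).
  by rewrite (subset_trans _ dihedral_norm_cycle_st) ?cycle_subG ?s_in_W.
have tiRS : <[r]> :&: <[s]> = 1.
  apply/eqP; rewrite eqEsubset sub1G andbT; apply/subsetP => x /setIP[xr].
  rewrite (cycle2g os) => /set2P[-> // | xs].
  by rewrite xs (negbTE s_notin_cycle_st) in xr.
rewrite sdprodE // -norm_joinEr //; apply/eqP; rewrite eqEsubset.
rewrite join_subG !cycle_subG st_in_W s_in_W andbT gen_subG; apply/subsetP => x.
have srs : s \in <[r]> <*> <[s]> by rewrite mem_gen // inE cycle_id orbT.
have rrs : r \in <[r]> <*> <[s]> by rewrite mem_gen // inE cycle_id.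
by move=> /set2P[]-> //; rewrite -[X in X \in _](mulKg s) groupM ?groupV.
Qed.

Lemma card_dihedral : #|W| = (2 * k * 2)%N.
Proof.
have [_ <- _ tiRS] := sdprodP dihedral_sdprod.
by rewrite TI_cardMg // -!orderE ort os.
Qed.

Lemma mem_dihedral g :
  g \in W -> exists2 a, (a < 2 * k)%N & g = r ^+ a \/ g = r ^+ a * s.
Proof.
have [_ <- _ _] := sdprodP dihedral_sdprod.
case/mulsgP => _ y /cycleP[i ->] ys ->.
exists (i %% #[r])%N; first by rewrite -ort ltn_pmod ?order_gt0.
rewrite expg_mod_order; move: ys; rewrite cycle2g // !inE.
by case/orP => /eqP->; [left; rewrite mulg1 | right].
Qed.

Definition alt_prod_le (n : nat) (g : gT) := exists a,
  [\/ g = r ^+ a /\ (2 * a <= n)%N, g = r^-1 ^+ a /\ (2 * a <= n)%N,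
      g = r ^+ a * s /\ (2 * a < n)%N | g = r^-1 ^+ a * t /\ (2 * a < n)%N].

Lemma alt_prod_leM n x g :
  x \in [set s; t] -> alt_prod_le n g -> alt_prod_le n.+1 (x * g).
Proof.
have sC g' : s * g' = g' ^ s * s by exact: mulg_invol_conj.
have tC g' : t * g' = g' ^ t * t by exact: mulg_invol_conj.
move=> /set2P[]-> [a [[-> le_a]|[-> le_a]|[-> le_a]|[-> le_a]]].
- rewrite (sC (r ^+ a)) conjXg_st_s; case: a le_a => [|a] le_a.
    by exists 0%N; apply: Or43; rewrite !expg0; split=> //; lia.
  by exists a; apply: Or44; rewrite expgSr -mulgA mulVg_st_s; split=> //; lia.
- by exists a; apply: Or43; rewrite (sC (r^-1 ^+ a)) conjXVg_st_s; split=> //; lia.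
- exists a; apply: Or42; rewrite mulgA (sC (r ^+ a)) conjXg_st_s -mulgA (mulg_invol os) mulg1.
  by split=> //; lia.
- exists a.+1; apply: Or41; rewrite mulgA (sC (r^-1 ^+ a)) conjXVg_st_s -mulgA -expgSr.
  by split=> //; lia.
- by exists a; apply: Or44; rewrite (tC (r ^+ a)) conjXg_st_t; split=> //; lia.
- rewrite (tC (r^-1 ^+ a)) conjXVg_st_t; case: a le_a => [|a] le_a.
    by exists 0%N; apply: Or44; rewrite !expg0; split=> //; lia.
  by exists a; apply: Or43; rewrite expgSr -mulgA mulg_st_t; split=> //; lia.
- exists a.+1; apply: Or42; rewrite mulgA (tC (r ^+ a)) conjXg_st_t -mulgA -invg_st -expgSr.
  by split=> //; lia.
- exists a; apply: Or41; rewrite mulgA (tC (r^-1 ^+ a)) conjXVg_st_t -mulgA (mulg_invol ot) mulg1.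
  by split=> //; lia.
Qed.

Lemma word_alt_prod_le ws :
  all (fun x => x \in [set s; t]) ws -> alt_prod_le (size ws) (\prod_(x <- ws) x).
Proof.
elim: ws => [|x ws IHws] /=.
  by rewrite big_nil; exists 0%N; apply: Or41; rewrite expg0.
by case/andP => x_st /IHws; rewrite big_cons; apply: alt_prod_leM.
Qed.

Lemma expg_st_k_not_alt_prod_le n : (n < 2 * k)%N -> ~ alt_prod_le n (r ^+ k).
Proof.
move=> lt_n_2k [a [[e le_a]|[e le_a]|[e _]|[e _]]].
- move/eqP: e; rewrite eq_expg_mod_order ort !modn_small; lia.
- have /eqP : r ^+ (a + k) = r ^+ 0 by rewrite expgD e expgVn mulgV.
  rewrite eq_expg_mod_order ort mod0n modn_small; lia.
- have := mem_cycle r k; rewrite e groupMl ?mem_cycle //.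
  exact/negP/s_notin_cycle_st.
- have := mem_cycle r k; rewrite e groupMl ?groupX ?groupV ?cycle_id //.
  exact/negP/t_notin_cycle_st.
Qed.

Lemma four_k_le_card : (4 * k <= #|gT|)%N.
Proof. by rewrite -[(4 * k)%N]/(2 * 2 * k)%N mulnAC -card_dihedral max_card. Qed.

Lemma cox_len_expg_st_k : (2 * k <= cox_len [set s; t] (r ^+ k))%N.
Proof.
apply: cox_len_ge => [|n /word_of_lenP[ws [<- st_ws prod_ws]]].
  by have := four_k_le_card; lia.
rewrite leqNgt; apply/negP => short_ws.
by have := word_alt_prod_le st_ws; rewrite prod_ws; exact: expg_st_k_not_alt_prod_le.
Qed.

Lemma cox_len_lt_word g ws :
  all (fun z => z \in [set s; t]) ws -> \prod_(z <- ws) z = g ->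
  (size ws < 2 * k)%N -> (cox_len [set s; t] g < 2 * k)%N.
Proof.
move=> st_ws prod_ws short_ws; apply: (leq_ltn_trans _ short_ws).
apply: cox_len_le; first by have := four_k_le_card; lia.
by apply/word_of_lenP; exists ws.
Qed.

Lemma cox_len_lt_2k g :
  g \in W -> g != r ^+ k -> (cox_len [set s; t] g < 2 * k)%N.
Proof.
have expg_st_rev a : (k <= a < 2 * k)%N -> r ^+ a = r^-1 ^+ (2 * k - a).
  move=> le_a; apply/eqP; rewrite expgVn eq_sym eq_invg_mul -expgD.
  by rewrite subnK ?expg_st_2k //; lia.
case/mem_dihedral => a lt_a [-> | ->] ne_rk.
- have [lt_ak | lt_ka | eq_ak] := ltngtP a k; last by rewrite eq_ak eqxx in ne_rk.
    apply: (@cox_len_lt_word _ (alt_word s t a)).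
    + by rewrite all_alt_word ?s_in_st ?t_in_st.
    + by rewrite prod_alt_word.
    + by rewrite size_alt_word; lia.
  apply: (@cox_len_lt_word _ (alt_word t s (2 * k - a))).
  + by rewrite all_alt_word ?s_in_st ?t_in_st.
  + by rewrite prod_alt_word -invg_st expg_st_rev //; lia.
  + by rewrite size_alt_word; lia.
- have [lt_ak | le_ka] := ltnP a k.
    apply: (@cox_len_lt_word _ (rcons (alt_word s t a) s)).
    + by rewrite all_rcons s_in_st all_alt_word ?s_in_st ?t_in_st.
    + by rewrite big_rcons prod_alt_word.
    + by rewrite size_rcons size_alt_word; lia.
  apply: (@cox_len_lt_word _ (rcons (alt_word t s (2 * k - a).-1) t)).
  + by rewrite all_rcons t_in_st all_alt_word ?s_in_st ?t_in_st.
  + rewrite big_rcons prod_alt_word -invg_st expg_st_rev; last lia.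
    by rewrite -(prednK (_ : 0 < 2 * k - a)%N) ?expgSr -?mulgA ?mulVg_st_s //; lia.
  + by rewrite size_rcons size_alt_word; lia.
Qed.

Lemma longest_dihedral w0 : is_longest [set s; t] w0 -> w0 = r ^+ k.
Proof.
case/andP => w0W /forall_inP longest_w0; apply/eqP; apply: contraT => ne_w0.
have := longest_w0 _ (groupX k st_in_W); have := cox_len_expg_st_k.
have := cox_len_lt_2k w0W ne_w0; lia.
Qed.

Lemma conjXg_st_st a b : (r ^+ a) ^ (r ^+ b) = r ^+ a.
Proof. by rewrite /conjg (commuteX2 a b (commute_refl r)) mulKg. Qed.

Lemma conjg_expg_st_k g : g \in W -> (r ^+ k) ^ g = r ^+ k.
Proof.
have rk_s : (r ^+ k) ^ s = r ^+ k.
  rewrite conjXg_st_s; apply/eqP; rewrite expgVn eq_invg_mul -expgD addnn -mul2n.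
  by rewrite expg_st_2k.
by case/mem_dihedral => b _ [->|->]; rewrite ?conjgM conjXg_st_st ?rk_s.
Qed.

Lemma cent1_expg_st j : (0 < j < k)%N -> 'C_W[r ^+ j] = <[r]>.
Proof.
move=> lt_jk; apply/eqP; rewrite eqEsubset subsetI !cycle_subG st_in_W cent1E.
rewrite (commuteX j (commute_refl r)) eqxx /= andbT.
apply/subsetP => x /setIP[xW]; rewrite cent1E => /eqP cx.
case: (mem_dihedral xW) => a _ [-> | def_x]; first by rewrite mem_cycle.
have : (r ^+ j) ^ x = r ^+ j by rewrite /conjg -cx mulKg.
rewrite def_x conjgM conjXg_st_st conjXg_st_s => e.
have : r ^+ (j + j) == 1 by rewrite expgD -{1}e expgVn mulVg.
by rewrite -order_dvdn ort addnn -mul2n dvdn_pmul2l // => /dvdn_leq; lia.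
Qed.

Lemma cent1_expg_st_k : 'C_W[r ^+ k] = W.
Proof.
apply/setIidPl/subsetP => g gW; rewrite cent1E; apply/eqP.
by rewrite [RHS]conjgC conjg_expg_st_k.
Qed.

Lemma order_expg_st_k : #[r ^+ k] = 2%N.
Proof. by rewrite orderXdiv ort ?dvdn_mull // mulnK. Qed.

Lemma mem_cycle_expg_st_k a : (r ^+ a \in <[r ^+ k]>) = (2 * k %| 2 * a)%N.
Proof.
apply/idP/idP => [ra_in | ].
  have := order_dvdG ra_in; rewrite -orderE order_expg_st_k order_dvdn -expgM.
  by rewrite -order_dvdn ort (mulnC a).
by rewrite dvdn_pmul2l // => /dvdnP[c ->]; rewrite mulnC expgM mem_cycle.
Qed.

Local Open Scope ring_scope.

Lemma cfInd_cycle_st_value (phi : 'CF(<[r]>)) x :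
  ('Ind[W] phi) x = phi x + phi (x ^ s)%g.
Proof. exact: cfInd_sdprod_involution dihedral_sdprod. Qed.

Lemma cfInd1_cycle_expg_st_k_value x : x \in W ->
  ('Ind[W] (1 : 'CF(<[r ^+ k]>))) x = (x \in <[r ^+ k]>)%:R *+ (2 * k).
Proof.
move=> xW; have rkW : <[r ^+ k]> \subset W by rewrite cycle_subG groupX ?st_in_W.
rewrite cfIndE // (eq_bigr (fun _ => (x \in <[r ^+ k]>)%:R)) => [|y yW]; last first.
  by rewrite cfun1E memJ_norm //; apply/normP; rewrite -cycleJ conjg_expg_st_k.
rewrite sumr_const card_dihedral -orderE order_expg_st_k mulrnA.
by rewrite -(mulr_natr (_ *+ (2 * k)) 2) mulrC mulfK ?pnatr_eq0.
Qed.

Lemma sign_char_expg_st (eps : 'CF(W)) a :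
  eps \is a linear_char -> eps s = -1 -> eps t = -1 -> eps (r ^+ a)%g = 1.
Proof.
move=> eps_lin eps_s eps_t.
by rewrite lin_charX ?st_in_W // lin_charM ?s_in_W ?t_in_W // eps_s eps_t mulrNN mulr1 expr1n.
Qed.

Lemma sum_Ind_phi_st (eps : 'CF(W)) (chi : nat -> 'CF(<[r]>)) :
  \sum_(1 <= j < k.+1) 'Ind[W] (phi_st k eps chi j)
    = eps + \sum_(1 <= j < k) 'Ind[W] (chi (2 * j)%N).
Proof.
rewrite big_nat_recr //= addrC /phi_st ltnn cfInd_Res_eqset; last exact: cent1_expg_st_k.
rewrite cfInd_id; congr (_ + _); apply: eq_big_nat => j /andP[j_gt0 lt_jk].
by rewrite lt_jk cfInd_Res_eqset //; apply: cent1_expg_st; rewrite j_gt0 lt_jk.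
Qed.

Lemma dihedral_Phi_S (zeta : algC) (eps : 'CF(W)) (chi : nat -> 'CF(<[r]>)) :
  (2 * k)%N.-primitive_root zeta ->
  eps \is a linear_char -> eps s = -1 -> eps t = -1 ->
  (forall j, chi j \is a linear_char /\ chi j r = zeta ^+ j) ->
  eps + \sum_(1 <= j < k) 'Ind[W] (chi (2 * j)%N)
    = 'Ind[W] (1 : 'CF(<[r ^+ k]>)) - 1.
Proof.
move=> zeta_prim eps_lin eps_s eps_t chiP; apply/cfunP => x.
rewrite !cfunE sum_cfunE; have [xW | xW'] := boolP (x \in W); last first.
  by rewrite big1 => [|j _]; rewrite ?cfun0 ?addr0 ?subr0.
rewrite cfInd1_cycle_expg_st_k_value // cfun1E xW.
case: (mem_dihedral xW) => a _ [-> | ->].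
- pose u := zeta ^+ (2 * a).
  have chi_rot j : ('Ind[W] (chi (2 * j)%N)) (r ^+ a)%g = u ^+ j + u^-1 ^+ j.
    have [chi_lin chi_r] := chiP (2 * j)%N.
    rewrite cfInd_cycle_st_value conjXg_st_s expgVn lin_charV ?mem_cycle //.
    by rewrite lin_charX ?cycle_id // chi_r exprVn -!exprM mulnAC.
  have uk1 : u ^+ k = 1 by rewrite /u -exprM mulnAC exprM (prim_expr_order zeta_prim) expr1n.
  have u1E : (u == 1) = (2 * k %| 2 * a)%N by rewrite /u -(prim_order_dvd zeta_prim).
  rewrite sign_char_expg_st // (eq_bigr _ (fun j _ => chi_rot j)) big_split /=.
  rewrite !sumr_expr_unity_root ?exprVn ?uk1 ?invr1 // invr_eq1 u1E mem_cycle_expg_st_k.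
  by case: (2 * k %| 2 * a)%N; rewrite /= ?mul0rn ?natrM; ring.
- have rsW : (r ^+ a * s \in W)%g by rewrite groupM ?groupX ?st_in_W ?s_in_W.
  have rs_notin : (r ^+ a * s \notin <[r ^+ k]>)%g.
    by apply: contra (reflection_notin_cycle_st a); apply/subsetP; rewrite cycle_subG mem_cycle.
  rewrite big1 => [|j _]; last first.
    rewrite cfInd_cycle_st_value !cfun0 ?addr0 ?reflection_notin_cycle_st //.
    by rewrite memJ_norm ?reflection_notin_cycle_st ?(subsetP dihedral_norm_cycle_st) ?s_in_W.
  rewrite (negbTE rs_notin) lin_charM ?groupX ?st_in_W ?s_in_W // sign_char_expg_st // eps_s.
  by rewrite mul1r addr0 mul0rn sub0r.
Qed.

End DihedralCoxeterSystem.

Local Open Scope ring_scope.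

Theorem proposition5p6 (gT : finGroupType) (s t : gT) (k : nat) (zeta : algC)
  (eps : 'CF(<<[set s; t]>>)) (chi : nat -> 'CF(<[(s * t)%g]>)) (w0 : gT) :
  (0 < k)%N ->
  #[s]%g = 2%N -> #[t]%g = 2%N -> #[(s * t)%g]%g = (2 * k)%N ->
  (2 * k)%N.-primitive_root zeta ->
  eps \is a linear_char -> eps s = -1 -> eps t = -1 ->
  (forall j : nat, chi j \is a linear_char /\ chi j (s * t)%g = zeta ^+ j) ->
  is_longest [set s; t] w0 ->
  [/\ (forall j : nat, (0 < j < k)%N ->
          ('C_(<<[set s; t]>>)[(s * t) ^+ j] = <[s * t]>)%g),
      ('C_(<<[set s; t]>>)[(s * t) ^+ k] = <<[set s; t]>>)%g,
      (forall j : nat, (0 < j <= k)%N -> phi_st k eps chi j \is a linear_char),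
      \sum_(1 <= j < k.+1) 'Ind[<<[set s; t]>>] (phi_st k eps chi j)
        = eps + \sum_(1 <= j < k) 'Ind[<<[set s; t]>>] (chi (2 * j)%N)
    & eps + \sum_(1 <= j < k) 'Ind[<<[set s; t]>>] (chi (2 * j)%N)
        = Phi_S [set s; t] w0].
Proof.
move=> k_gt0 os ot ort zeta_prim eps_lin eps_s eps_t chiP w0_longest.
split.
- exact: cent1_expg_st.
- exact: cent1_expg_st_k.
- move=> j _; rewrite /phi_st; case: ifP => _; apply: cfRes_lin_char.
    exact: (chiP _).1.
  exact: eps_lin.
- exact: sum_Ind_phi_st.
- rewrite /Phi_S (longest_dihedral k_gt0 os ot ort w0_longest).
  exact: (dihedral_Phi_S k_gt0 os ot ort zeta_prim eps_lin eps_s eps_t chiP).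
Qed.
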